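(* Let $Z$ be a completely Hausdorff topological space and $H:\mathbb R\times Z\to Z$ a continuous locally free action of $\mathbb R$ on $Z$. Then every point $x\in Z$ admits a neighborhood $U$ and a homeomorphism $U\cong I\times T$, where $I\subset\mathbb R$ is a neighborhood of $0$ and $T$ is a topological space, with $x$ corresponding to some $(0,\tau_0)$, such that in these coordinates the action is given by $t\cdot(s,\tau)=(t+s,\tau)$ for $(t,(s,\tau))$ in a neighborhood of $(0,(0,\tau_0))$ in $\mathbb R\times U$. Moreover, for two such coordinate systems, the change of coordinates is of the form $(s,\tau)\mapsto(s+s_\tau,\tau'(\tau))$ where $\tau\mapsto s_\tau$ and $\tau\mapsto\tau'(\tau)$ are continuous; in particular these charts give $Z$ the structure of an oriented lamination by one-dimensional Lipschitz manifolds.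
   Context: A space is completely Hausdorff if any two distinct points can be separated by a continuous real-valued function. The action is locally free if for every $z\in Z$ there is $\eta>0$ such that $H(t,z)=z$ with $|t|<\eta$ implies $t=0$. *)

From HB Require Import structures.
From mathcomp Require Import all_boot all_order all_algebra.
From mathcomp Require Import all_classical all_reals all_analysis.
Set Implicit Arguments. Unset Strict Implicit. Unset Printing Implicit Defensive.
Import Order.TTheory GRing.Theory Num.Theory.
Import numFieldNormedType.Exports.
Local Open Scope classical_set_scope.
Local Open Scope ring_scope.

Definition completely_hausdorff (R : realType) (Z : topologicalType) : Prop :=
  forall x y : Z, x <> y ->
    exists f : Z -> R, continuous f /\ f x <> f y.

Definition is_R_action (R : realType) (Z : topologicalType)
  (H : R * Z -> Z) : Prop :=
  (forall z, H (0, z) = z) /\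
  (forall (t s : R) z, H (t + s, z) = H (t, H (s, z))).

Definition locally_free (R : realType) (Z : topologicalType)
  (H : R * Z -> Z) : Prop :=
  forall z : Z, exists2 eta : R, 0 < eta &
    forall t : R, `|t| < eta -> H (t, z) = z -> t = 0.

Definition flow_chart (R : realType) (Z : topologicalType)
  (H : R * Z -> Z) (T : topologicalType) (U : set Z) (I : set R)
  (phi : Z -> R * T) (psi : R * T -> Z) : Prop :=
  [/\ open U, open I & I 0] /\
  [/\ {within U, continuous phi} & {within I `*` [set: T], continuous psi}] /\
  (forall z, U z -> (I `*` [set: T]) (phi z) /\ psi (phi z) = z) /\
  (forall q, (I `*` [set: T]) q -> U (psi q) /\ phi (psi q) = q) /\
  (forall z, U z -> \forall tw \near ((0 : R), z),
      phi (H tw) = ((phi tw.2).1 + tw.1, (phi tw.2).2)).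

From HB Require Import structures.
From mathcomp Require Import all_boot all_order all_algebra.
From mathcomp Require Import all_classical all_reals all_analysis.
From mathcomp Require Import lra.
Set Implicit Arguments. Unset Strict Implicit. Unset Printing Implicit Defensive.
Import Order.TTheory GRing.Theory Num.Theory.
Import numFieldNormedType.Exports.
Local Open Scope classical_set_scope.
Local Open Scope ring_scope.

(* Around x, local freeness gives e > 0 with H (e, x) <> x, and complete
   Hausdorffness a continuous f with f x < f (H (e, x)).  The orbit average
   g z = \int_0^e f (H (t, z)) dt is continuous, and along an orbit its
   derivative is s |-> f (H (s + e, w)) - f (H (s, w)), which is positive for
   (s, w) near (0, x).  Hence g is strictly increasing on the orbit segments
   H ([-2d, 2d], w) for w in a neighbourhood W0 of x.  The level set
   S = {w in W0 | g w = g x} is then a local transversal: (s, w) |-> H (s, w)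
   is injective on (-d, d) x S, and by the intermediate value theorem its
   image U is open with a continuous inverse, in which the action is a
   translation of the first coordinate.  The change of charts only uses the
   chart axioms: near a common point, chart 2 reads chart 1 as
   (s, tau) |-> (s + sigma tau, theta tau) with sigma, theta taken from the
   slice through that point. *)

Lemma pair_left_continuous (X Y : topologicalType) (y : Y) :
  continuous (fun x : X => (x, y)).
Proof. by move=> x; apply: cvg_pair; [exact: cvg_id | exact: cvg_cst]. Qed.

Lemma pair_right_continuous (X Y : topologicalType) (x : X) :
  continuous (fun y : Y => (x, y)).
Proof. by move=> y; apply: cvg_pair; [exact: cvg_cst | exact: cvg_id]. Qed.

Lemma open_setXT (X Y : topologicalType) (A : set X) :
  open A -> open (A `*` [set: Y]).
Proof.
move=> oA; rewrite openE => -[a b] /= [Aa _].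
exists (A, [set: Y]); last by move=> [? ?] [].
by split => //=; [exact: open_nbhs_nbhs | exact: filterT].
Qed.

(* A map into a subspace type is continuous at z as soon as its composite
   with the inclusion is: the subspace carries the initial topology. *)
Lemma continuous_set_type_at (X Y : topologicalType) (A : set Y)
    (f : X -> set_type A) (z : X) :
  {for z, continuous (fun x => set_val (f x))} -> {for z, continuous f}.
Proof.
move=> cf B [?/= [[W oW <-]]] /= Wfz /filterS; apply; apply: cf.
exact: open_nbhs_nbhs.
Qed.

Section SegmentIntegrals.
Context (R : realType).
Notation mu := (@lebesgue_measure R).

Lemma lebesgue_measure_segment (a b : R) : a <= b -> mu `[a, b] = (b - a)%:E.
Proof.
move=> ab; rewrite lebesgue_measure_itv/= lte_fin.
case: ltP => ba; first by rewrite EFinB.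
have -> : b = a by apply/le_anti; rewrite ba ab.
by rewrite subrr.
Qed.

Lemma continuous_integrable_segment (h : R -> R) (a b : R) :
  continuous h -> mu.-integrable `[a, b] (EFin \o h).
Proof.
move=> ch; apply: continuous_compact_integrable; first exact: segment_compact.
exact: continuous_subspaceT.
Qed.

(* Tube lemma: a continuous G is uniformly close to G(., z0) on a compact
   segment for z near z0. *)
Lemma segment_uniformly_near (Z : topologicalType) (G : R * Z -> R)
    (a b eps : R) (z0 : Z) : continuous G -> 0 < eps ->
  \forall z \near z0, forall t, t \in `[a, b] -> `|G (t, z0) - G (t, z)| < eps.
Proof.
move=> cG eps0.
have cov : near_covering `[a, b] by apply/compact_near_coveringP; exact: segment_compact.
apply: (cov Z (nbhs z0) (fun z t => `|G (t, z0) - G (t, z)| < eps)) => t _.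
have /cvgrPdist_lt /(_ (eps / 2)) := cG (t, z0).
case=> [|[A B] /= [nA nB] sAB]; first by rewrite divr_gt0.
exists (A, B) => // -[t' z] /= [At' Bz].
have /= close0 := sAB (t', z0) (conj At' (nbhs_singleton nB)).
have /= close := sAB (t', z) (conj At' Bz).
rewrite -(subrKA (G (t, z0))) (le_lt_trans (ler_normD _ _))//.
by rewrite (splitr eps) ltrD// distrC.
Qed.

Lemma parametric_integral_continuous (Z : topologicalType) (G : R * Z -> R)
    (a b : R) : a <= b -> continuous G ->
  continuous (fun z => \int[mu]_(t in `[a, b]) G (t, z)).
Proof.
move=> ab cG z0; apply/cvgrPdist_le => e e0.
have ab1 : 0 < b - a + 1 by rewrite ltr_pwDr// subr_ge0.
have cGz z : continuous (fun t => G (t, z)).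
  move=> t; apply: (@continuous_comp _ _ _ (fun t => (t, z)) G); last exact: cG.
  exact: pair_left_continuous.
have intG z : mu.-integrable `[a, b] (EFin \o (fun t => G (t, z))).
  exact: continuous_integrable_segment.
move: (segment_uniformly_near a b z0 cG (divr_gt0 e0 ab1)).
apply: filterS => z Hz; rewrite -RintegralB//.
apply: (le_trans (le_normr_Rintegral _ _)) => //.
  by apply: continuous_integrable_segment => t; apply: continuousB; apply: cGz.
apply: (@le_trans _ _ (\int[mu]_(t in `[a, b]) (e / (b - a + 1)))).
  apply: le_Rintegral => //.
  - apply: continuous_integrable_segment => t.
    by apply: cvg_norm; apply: continuousB; apply: cGz.
  - by apply: continuous_integrable_segment => t; exact: cvg_cst.
  by move=> t tab; apply: ltW; apply: Hz.
rewrite Rintegral_cst// (congr1 fine (lebesgue_measure_segment ab))/=.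
by rewrite mulrAC ler_pdivrMr// ler_wpM2l ?ltW// ?ltrDl.
Qed.

Lemma derivable_shift (f : R -> R) (k x : R) :
  derivable f (x + k) 1 -> derivable (fun t => f (t + k)) x 1.
Proof.
rewrite /derivable /=.
suff -> : (fun h : R => h^-1 *: (f (h *: 1 + x + k) - f (x + k))) =
  (fun h => h^-1 *: (f (h *: 1 + (x + k)) - f (x + k))) by [].
by apply/funext => h; rewrite addrA.
Qed.

Lemma derive1_shift (f : R -> R) (k x : R) :
  derive1 (fun t => f (t + k)) x = derive1 f (x + k).
Proof.
rewrite /derive1 /=.
suff -> : (fun h : R => h^-1 *: (f (h + x + k) - f (x + k))) =
  (fun h => h^-1 *: (f (h + (x + k)) - f (x + k))) by [].
by apply/funext => h; rewrite addrA.
Qed.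

Definition primitive (phi : R -> R) (a x : R) := \int[mu]_(t in `[a, x]) phi t.

Lemma primitive_derive (phi : R -> R) (a u : R) : continuous phi -> a < u ->
  derivable (primitive phi a) u 1 /\ derive1 (primitive phi a) u = phi u.
Proof.
move=> cphi au.
have uu1 : u < u + 1 by rewrite ltrDl.
apply: (@continuous_FTC1_closed R phi a u (u + 1) uu1) => //.
  exact: continuous_integrable_segment.
exact: cphi.
Qed.

Lemma primitive_shift_derive (phi : R -> R) (a k s : R) : continuous phi ->
    a < s + k ->
  derivable (fun t => primitive phi a (t + k)) s 1 /\
  derive1 (fun t => primitive phi a (t + k)) s = phi (s + k).
Proof.
move=> cphi ask; have [d1 d2] := primitive_derive cphi ask.
by split; [exact: derivable_shift | rewrite derive1_shift].
Qed.

Lemma sliding_integralE (phi : R -> R) (a s e : R) :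
    continuous phi -> a < s -> 0 < e ->
  \int[mu]_(t in `[0, e]) phi (t + s) = primitive phi a (e + s) - primitive phi a s.
Proof.
move=> cphi aS e0.
have dP (t : R) : 0 <= t -> derivable (fun t => primitive phi a (t + s)) t 1 /\
    derive1 (fun t => primitive phi a (t + s)) t = phi (t + s).
  by move=> t0; apply: primitive_shift_derive => //; rewrite (lt_le_trans aS)// lerDr.
have cP (t : R) : 0 <= t -> {for t, continuous (fun t => primitive phi a (t + s))}.
  move=> t0; apply: differentiable_continuous.
  by apply/derivable1_diffP; case: (dP t t0).
rewrite /Rintegral (@continuous_FTC2 R _ (fun t => primitive phi a (t + s)) 0 e e0) ?add0r//.
- apply: continuous_subspaceT => t; apply: continuous_comp; last exact: cphi.
  by apply: cvgD; [exact: cvg_id | exact: cvg_cst].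
- split.
  + by move=> t; rewrite in_itv/= => /andP[t0 _]; case: (dP t (ltW t0)).
  + by apply: cvg_at_right_filter; apply: cP.
  + by apply: cvg_at_left_filter; apply: cP; exact: ltW.
- by move=> t; rewrite in_itv/= => /andP[t0 _]; case: (dP t (ltW t0)).
Qed.

(* If phi (s + e) > phi s throughout [-d, d], then sliding the window
   [0, e] along [-d, d] strictly increases the integral of phi: its derivative
   is phi (s + e) - phi s. *)
Lemma sliding_integral_increasing (phi : R -> R) (e d : R) :
    continuous phi -> 0 < e ->
  (forall s, -d <= s <= d -> phi s < phi (s + e)) ->
  forall s1 s2, -d <= s1 -> s1 < s2 -> s2 <= d ->
  \int[mu]_(t in `[0, e]) phi (t + s1) < \int[mu]_(t in `[0, e]) phi (t + s2).
Proof.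
move=> cphi e0 hphi s1 s2 ds1 s12 s2d.
set a := - d - 1.
have ad s : -d <= s -> a < s by move=> ?; rewrite /a; lra.
have as1 : a < s1 by apply: ad.
have as2 : a < s2 by apply: ad; lra.
rewrite !(@sliding_integralE phi a)// ![e + _]addrC.
pose f := (fun s => primitive phi a (s + e)) - primitive phi a.
have df (s : R) : -d <= s -> derivable f s 1 /\ derive1 f s = phi (s + e) - phi s.
  move=> ds; have dse : -d <= s + e by lra.
  have [a1 a2] := primitive_shift_derive cphi (ad _ dse).
  have [b1 b2] := primitive_derive cphi (ad _ ds).
  split; first exact: (derivableB a1 b1).
  by rewrite derive1E (deriveB a1 b1) -!derive1E a2 b2.
have s1I : s1 \in `[- d, d] by rewrite in_itv/= ds1; lra.
have s2I : s2 \in `[- d, d] by rewrite in_itv/= s2d andbT; lra.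
change (f s1 < f s2).
apply: (@gtr0_derive1_lt_cc R f (- d) d) => //.
- by move=> t; rewrite in_itv/= => /andP[dt _]; case: (df t (ltW dt)).
- move=> t; rewrite in_itv/= => /andP[dt td]; have [_ ->] := df t (ltW dt).
  by rewrite subr_gt0; apply: hphi; rewrite !ltW.
- apply: continuous_in_subspaceT => t; rewrite inE/= in_itv/= => /andP[dt _].
  apply: differentiable_continuous; apply/derivable1_diffP.
  by case: (df t dt).
Qed.

End SegmentIntegrals.

Section FlowBox.
Context (R : realType) (Z : topologicalType) (H : R * Z -> Z).
Hypotheses (hH : continuous H) (hact : is_R_action H).
Variables (x : Z) (g : Z -> R) (W0 : set Z) (d : R).
Hypotheses (cg : continuous g) (oW0 : open W0) (W0x : W0 x) (d0 : 0 < d).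
Hypothesis g_increasing : forall w, W0 w -> forall s1 s2,
  -(2 * d) <= s1 -> s1 < s2 -> s2 <= 2 * d -> g (H (s1, w)) < g (H (s2, w)).

Let H0 z : H (0, z) = z. Proof. by case: hact. Qed.
Let HD t s z : H (t + s, z) = H (t, H (s, z)). Proof. by case: hact. Qed.
Let HN s w : H (- s, H (s, w)) = w. Proof. by rewrite -HD addNr H0. Qed.

Let transversal := [set w | W0 w /\ g w = g x].
Local Notation S := (set_type transversal).
Let xS : S := SigSub (mem_set (conj W0x erefl : transversal x)).

Let psi (q : R * S) : Z := H (q.1, set_val q.2).
Let coords z (q : R * S) := `|q.1| < d /\ psi q = z.
Let phi z := xget (0, xS) (coords z).
Let U := [set z | exists q, coords z q].

Lemma g_orbit_injective w s : W0 w -> `|s| < 2 * d -> g (H (s, w)) = g w -> s = 0.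
Proof.
move=> Ww; rewrite ltr_norml => /andP[sl sr] gs.
have [d2 d2'] : 0 <= 2 * d /\ - (2 * d) <= 0 by split; lra.
case: (ltgtP s 0) => // [sn|sp].
- by have := g_increasing Ww (ltW sl) sn d2; rewrite H0 gs ltxx.
- by have := g_increasing Ww d2' sp (ltW sr); rewrite H0 gs ltxx.
Qed.

(* Flow-box coordinates are unique, so phi is a genuine inverse of psi. *)
Lemma coords_unique z q1 q2 : coords z q1 -> coords z q2 -> q1 = q2.
Proof.
move: q1 q2 => [s1 w1] [s2 w2] [/= I1 e1] [/= I2 e2].
have [W2 g2] := set_valP w2; have [_ g1] := set_valP w1.
have w1E : set_val w1 = H (s2 - s1, set_val w2).
  by rewrite -(HN s1 (set_val w1)) /psi/= in e1 *; rewrite e1 -e2 addrC HD.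
have s12 : s2 - s1 = 0.
  apply: (g_orbit_injective W2); last by rewrite -w1E g1 g2.
  by rewrite (le_lt_trans (ler_normB _ _))//; lra.
have s1E : s1 = s2 by lra.
rewrite s12 H0 in w1E; rewrite s1E; congr pair; exact: val_inj.
Qed.

Lemma phi_coords z : U z -> coords z (phi z).
Proof. by move=> Uz; apply: xgetPex. Qed.

Lemma phi_eq z q : coords z q -> phi z = q.
Proof. by move=> zq; apply: (@coords_unique z) => //; apply: phi_coords; exists q. Qed.

Lemma coords_of_crossing z' c : `|c| < d -> W0 (H (- c, z')) ->
  g (H (- c, z')) = g x -> U z' /\ (phi z').1 = c.
Proof.
move=> cd Wc gc; have tc : transversal (H (- c, z')) by [].
have zq : coords z' (c, SigSub (mem_set tc)) by split => //; rewrite /psi/= -HD subrr H0.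
by split; [exists (c, SigSub (mem_set tc)) | rewrite (phi_eq zq)].
Qed.

Lemma g_backward_orbit_continuous (z : Z) : continuous (fun s : R => g (H (- s, z))).
Proof.
move=> s; apply: (@continuous_comp _ _ _ (fun s => H (- s, z)) g); last exact: cg.
apply: (@continuous_comp _ _ _ (fun s : R => (- s, z)) H); last exact: hH.
apply: (@cvg_pair _ _ _ (nbhs s) (nbhs (- s)) (nbhs z)); last exact: cvg_cst.
exact: cvgN.
Qed.

Lemma g_flow_continuous (s : R) : continuous (fun z => g (H (s, z))).
Proof.
move=> z; apply: continuous_comp; last exact: cg.
apply: continuous_comp; last exact: hH.
exact: pair_right_continuous.
Qed.

Lemma level_crossing z' a b : a <= b ->
    g x < g (H (- a, z')) -> g (H (- b, z')) < g x ->
  exists2 c, a <= c <= b & g (H (- c, z')) = g x.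
Proof.
move=> ab ga gb.
have cf : {within `[a, b], continuous (fun s => g (H (- s, z')))}.
  exact/continuous_subspaceT/g_backward_orbit_continuous.
have v : Num.min (g (H (- a, z'))) (g (H (- b, z'))) <= g x <=
         Num.max (g (H (- a, z'))) (g (H (- b, z'))).
  by rewrite ge_min le_max (ltW gb) (ltW ga) orbT.
by have [c] := IVT ab cf v; rewrite in_itv/=; exists c.
Qed.

Lemma phi_first_near z : U z -> forall e, 0 < e ->
  \forall z' \near z, U z' /\ `|(phi z').1 - (phi z).1| < e.
Proof.
move=> Uz e e0; have [] := phi_coords Uz.
case: (phi z) => [s0 w0] /= Iz zE.
have [W0w0 gw0] := set_valP w0.
have w0E : H (- s0, z) = set_val w0 by rewrite -zE /psi HN.
have [[A B] /= [nA nB] sAB] : \forall p \near (- s0, z), W0 (H p).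
  by apply: hH; rewrite w0E; exact: open_nbhs_nbhs.
case/nbhs_ballP: nA => r r0 bA.
pose m := Num.min (Num.min e (d - `|s0|)) r.
have m0 : 0 < m by rewrite !lt_min e0 r0 subr_gt0 Iz.
have [me md mr] : [/\ m <= e, m <= d - `|s0| & m <= r] by rewrite !ge_min !lexx !orbT.
pose rho := m / 2.
have [rho0 rhom] : 0 < rho /\ rho < m by rewrite /rho; split; lra.
have /andP[nb1 nb2] : - `|s0| <= s0 <= `|s0| by rewrite -ler_norml.
have g_before : g x < g (H (- (s0 - rho), z)).
  rewrite opprB -zE /psi/= -HD subrK -gw0.
  by have := @g_increasing _ W0w0 0 rho; rewrite H0; apply; lra.
have g_after : g (H (- (s0 + rho), z)) < g x.
  rewrite -zE /psi/= -HD -gw0 (_ : - (s0 + rho) + s0 = - rho); last by lra.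
  by have := @g_increasing _ W0w0 (- rho) 0; rewrite H0; apply; lra.
have Fz : Filter (nbhs z) := nbhs_filter z.
have near_before := @cvgr_gt _ _ _ Fz _ _ (@g_flow_continuous (- (s0 - rho)) z) _ g_before.
have near_after := @cvgr_lt _ _ _ Fz _ _ (@g_flow_continuous (- (s0 + rho)) z) _ g_after.
have near_all := @filterI Z (nbhs z) Fz _ _ near_before (@filterI Z (nbhs z) Fz _ _ near_after nB).
apply: (@filterS Z (nbhs z) Fz _ _ _ near_all) => z' [h1 [h2 h3]].
have [|c /andP[cl cr] gc] := level_crossing _ h1 h2; first lra.
have Wc : W0 (H (- c, z')).
  by apply: (sAB (- c, z')); split => //=; apply: bA; rewrite /ball/= ltr_norml; lra.
have [|Uz' ->] := coords_of_crossing _ Wc gc; first by rewrite ltr_norml; lra.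
by split => //; rewrite ltr_norml; lra.
Qed.

Lemma U_open : open U.
Proof.
rewrite openE => z Uz; rewrite /interior.
by apply: filterS (phi_first_near Uz ltr01) => z' [].
Qed.

Lemma psi_continuous : continuous psi.
Proof.
have val2 : continuous (fun q : R * S => set_val q.2).
  move=> q; apply: (@continuous_comp _ _ _ snd set_val); first exact: cvg_snd.
  exact: initial_continuous.
move=> q; apply: (@continuous_comp _ _ _ (fun q : R * S => (q.1, set_val q.2)) H).
  apply: (@cvg_pair _ _ _ (nbhs q) (nbhs q.1) (nbhs (set_val q.2))).
    exact: cvg_fst.
  exact: val2.
exact: hH.
Qed.

(* The second coordinate is the return to the transversal, z' |->
   H (- (phi z').1, z'), which is continuous by the above. *)
Lemma phi_continuous_at z : U z -> {for z, continuous phi}.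
Proof.
move=> Uz.
have -> : phi = (fun z => ((phi z).1, (phi z).2)) by apply/funext => z'; case: (phi z').
have phi1 : (fun z' => (phi z').1) @ z --> (phi z).1.
  apply/cvgrPdist_lt => e e0.
  by apply: filterS (phi_first_near Uz e0) => z' [_ h]; rewrite distrC.
apply: (@cvg_pair _ _ _ (nbhs z) (nbhs (phi z).1) (nbhs (phi z).2)); first exact: phi1.
apply: (@continuous_set_type_at Z Z transversal (fun z => (phi z).2) z).
have returnE z' : U z' -> set_val (phi z').2 = H (- (phi z').1, z').
  by move=> Uz'; have [_ e] := phi_coords Uz'; rewrite -[X in H (_, X)]e /psi HN.
have near_return : \forall z' \near z, H (- (phi z').1, z') = set_val (phi z').2.
  by apply: filterS (phi_first_near Uz ltr01) => z' [Uz' _]; rewrite returnE.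
apply: cvg_trans (near_eq_cvg near_return) _.
rewrite returnE//; apply: continuous_comp; last exact: hH.
apply: (@cvg_pair _ _ _ (nbhs z) (nbhs (- (phi z).1)) (nbhs z)); last exact: cvg_id.
exact: cvgN.
Qed.

Lemma phi_translate z t : U z -> `|(phi z).1 + t| < d ->
  phi (H (t, z)) = ((phi z).1 + t, (phi z).2).
Proof.
move=> Uz st; have [_ zE] := phi_coords Uz.
by apply: phi_eq; split => //; rewrite /psi/= addrC HD; congr (H (_, _)).
Qed.

Lemma flow_box_chart : exists (T : topologicalType) (U0 : set Z) (I0 : set R)
    (phi0 : Z -> R * T) (psi0 : R * T -> Z),
  [/\ U0 x, flow_chart H U0 I0 phi0 psi0 & (phi0 x).1 = 0].
Proof.
have x0 : coords x (0, xS) by split; [rewrite normr0 | rewrite /psi/= H0].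
have Ux : U x by exists (0, xS).
exists S, U, [set s : R | `|s| < d], phi, psi.
split => //; last by rewrite (phi_eq x0).
split; [split | split; [split | split; [|split]]].
- exact: U_open.
- have -> : [set s : R | `|s| < d] = ball (0 : R) d.
    by apply/funext => s; rewrite /ball/= sub0r normrN.
  exact: ball_open.
- by rewrite /= normr0.
- rewrite continuous_open_subspace; last exact: U_open.
  by move=> z /set_mem Uz; exact: phi_continuous_at.
- exact/continuous_subspaceT/psi_continuous.
- by move=> z Uz; have [Iz e] := phi_coords Uz.
- by move=> q [Iq _]; split; [exists q | exact: phi_eq].
move=> z Uz; have [Iz _] := phi_coords Uz.
pose m := (d - `|(phi z).1|) / 2.
have m0 : 0 < m by rewrite divr_gt0// subr_gt0.
exists (ball (0 : R) m, [set z' | U z' /\ `|(phi z').1 - (phi z).1| < m]).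
  by split; [exact: nbhsx_ballx | exact: phi_first_near].
move=> [t z'] /= [bt [Uz' hz']]; apply: phi_translate => //.
move: bt hz'; rewrite /ball/= sub0r normrN !ltr_norml /m.
move=> /andP[t1 t2] /andP[s1 s2].
have /andP[n1 n2] : - `|(phi z).1| <= (phi z).1 <= `|(phi z).1| by rewrite -ler_norml.
by apply/andP; split; lra.
Qed.

End FlowBox.

Section TransversalFunction.
Context (R : realType) (Z : topologicalType) (H : R * Z -> Z).
Hypotheses (hH : continuous H) (hact : is_R_action H).

(* Local freeness moves x by some small time e, and complete Hausdorffness
   detects the displacement with a continuous function increasing from x to
   H (e, x). *)
Lemma separating_displacement (x : Z) : completely_hausdorff R Z ->
    locally_free H ->
  exists e (f : Z -> R), [/\ 0 < e, continuous f & f x < f (H (e, x))].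
Proof.
move=> hZ hfree; have [eta eta0 heta] := hfree x.
have e0 : 0 < eta / 2 by rewrite divr_gt0.
have moved : x <> H (eta / 2, x).
  move=> fixed; suff : eta / 2 = 0 by move=> e00; rewrite e00 ltxx in e0.
  by apply: heta; [rewrite ger0_norm ?ltW//; lra | rewrite -fixed].
have [f [cf fne]] := hZ _ _ moved.
exists (eta / 2); case: (ltgtP (f x) (f (H (eta / 2, x)))) => [lt|gt|eq].
- by exists f.
- exists (fun z => - f z); split; rewrite ?ltrN2//.
  by move=> z; apply: cvgN; exact: cf.
- by move: fne; rewrite eq.
Qed.

Definition orbit_average (f : Z -> R) (e : R) (z : Z) :=
  \int[lebesgue_measure]_(t in `[0, e]) f (H (t, z)).

Lemma orbit_average_continuous (f : Z -> R) (e : R) : continuous f -> 0 <= e ->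
  continuous (orbit_average f e).
Proof.
move=> cf e0; apply: (@parametric_integral_continuous R Z (fun q => f (H q))) => // q.
by apply: (@continuous_comp _ _ _ H f); [exact: hH | exact: cf].
Qed.

(* If f x < f (H (e, x)), then f (H (s + e, w)) > f (H (s, w)) for (s, w)
   near (0, x), so the orbit average of f increases along orbit segments
   through a neighbourhood of x: its derivative in s is that difference. *)
Lemma orbit_average_increasing (f : Z -> R) (e : R) (x : Z) :
    continuous f -> 0 < e -> f x < f (H (e, x)) ->
  exists2 W0 : set Z, open W0 /\ W0 x & exists2 d : R, 0 < d &
    forall w, W0 w -> forall s1 s2, -(2 * d) <= s1 -> s1 < s2 -> s2 <= 2 * d ->
      orbit_average f e (H (s1, w)) < orbit_average f e (H (s2, w)).
Proof.
move=> cf e0 fx.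
have H0 z : H (0, z) = z by case: hact.
have HD t s z : H (t + s, z) = H (t, H (s, z)) by case: hact.
pose G (q : R * Z) := f (H q).
have cG : continuous G.
  by move=> q; apply: (@continuous_comp _ _ _ H f); [exact: hH | exact: cf].
pose K (q : R * Z) := G (q.1 + e, q.2) - G q.
have cK : continuous K.
  move=> q; apply: cvgB; last exact: cG.
  apply: (@continuous_comp _ _ _ (fun q : R * Z => (q.1 + e, q.2)) G); last exact: cG.
  apply: (@cvg_pair _ _ _ (nbhs q) (nbhs (q.1 + e)) (nbhs q.2)); last exact: cvg_snd.
  by apply: cvgD; [exact: cvg_fst | exact: cvg_cst].
have K0 : 0 < K (0, x) by rewrite /K /G /= add0r H0 subr_gt0.
have [[A B] /= [nA nB] sAB] : \forall q \near (0, x), 0 < K q.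
  exact: (cvgr_gt _ (cK (0, x)) _ K0).
case/nbhs_ballP: nA => r r0 bA.
rewrite nbhsE in nB; case: nB => W0 [oW0 W0x] W0B.
exists W0 => //; exists (r / 4); first by rewrite divr_gt0.
move=> w W0w s1 s2 h1 h12 h2.
have cfw : continuous (fun u => f (H (u, w))).
  move=> u; apply: (@continuous_comp _ _ _ (fun u => (u, w)) G); last exact: cG.
  exact: pair_left_continuous.
have slide s : orbit_average f e (H (s, w)) =
    \int[lebesgue_measure]_(t in `[0, e]) f (H (t + s, w)).
  by apply: eq_Rintegral => t _; rewrite HD.
rewrite !slide.
apply: (@sliding_integral_increasing R _ e (2 * (r / 4)) cfw e0 _ s1 s2) => // s /andP[sl sr].
have : 0 < K (s, w).
  apply: (sAB (s, w)); split => //=; last exact: W0B.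
  by apply: bA; rewrite /ball/= sub0r normrN ltr_norml; apply/andP; split; lra.
by rewrite /K /G /= subr_gt0.
Qed.

End TransversalFunction.

Section ChartTransition.
Context (R : realType) (Z : topologicalType) (H : R * Z -> Z).
Hypotheses (hH : continuous H) (hact : is_R_action H).
Variables (T : topologicalType) (U : set Z) (I : set R).
Variables (phi : Z -> R * T) (psi : R * T -> Z).
Hypothesis chart : flow_chart H U I phi psi.

Lemma chart_phi_continuous_at z : U z -> {for z, continuous phi}.
Proof.
case: chart => -[oU _ _] [[cphi _] _] Uz.
by move: cphi; rewrite continuous_open_subspace// => /(_ z (mem_set Uz)).
Qed.

Lemma chart_slice_continuous s : I s -> continuous (fun tau => psi (s, tau)).
Proof.
case: chart => -[_ oI _] [[_ cpsi] _] Is tau.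
apply: continuous_comp; first exact: pair_right_continuous.
move: cpsi; rewrite continuous_open_subspace; last exact: open_setXT.
by apply; apply: mem_set.
Qed.

Lemma chart_translation_near p : U p ->
  exists2 r : R, 0 < r & exists2 B : set Z, nbhs p B &
    forall t w, `|t| < r -> B w ->
      [/\ U w, U (H (t, w)) & phi (H (t, w)) = ((phi w).1 + t, (phi w).2)].
Proof.
case: chart => -[oU _ _] [_ [_ [_ translate]]] Up.
have H0 z : H (0, z) = z by case: hact.
have [[A B] /= [nA nB] sAB] := translate p Up.
have [[A' B'] /= [nA' nB'] sAB'] : \forall q \near (0, p), U (H q).
  by apply: hH; rewrite H0; exact: open_nbhs_nbhs.
have /nbhs_ballP[r r0 rA] : nbhs (0 : R) (A `&` A') by apply: filterI.
exists r => //; exists (B `&` B' `&` U).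
  by apply: filterI; [apply: filterI | exact: open_nbhs_nbhs].
move=> t w tr [[Bw B'w] Uw].
have [At A't] : (A `&` A') t by apply: rA; rewrite /ball/= sub0r normrN.
by split => //; [exact: (sAB' (t, w)) | exact: (sAB (t, w))].
Qed.

End ChartTransition.

(* Change of flow-box coordinates: near a common point, chart 2 reads chart 1
   as (s, tau) |-> (s + sigma tau, theta tau), where sigma and theta are read
   off on the slice through p. *)
Lemma chart_transition (R : realType) (Z : topologicalType) (H : R * Z -> Z)
    (hH : continuous H) (hact : is_R_action H) (T1 T2 : topologicalType)
    (U1 U2 : set Z) (I1 I2 : set R) (phi1 : Z -> R * T1) (psi1 : R * T1 -> Z)
    (phi2 : Z -> R * T2) (psi2 : R * T2 -> Z) :
  flow_chart H U1 I1 phi1 psi1 -> flow_chart H U2 I2 phi2 psi2 ->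
  forall p : Z, U1 p -> U2 p ->
  exists (Iv : set R) (Tv : set T1) (sigma : T1 -> R) (theta : T1 -> T2),
    [/\ open Iv, Iv (phi1 p).1 & Iv `<=` I1] /\
    [/\ open Tv, Tv (phi1 p).2, {within Tv, continuous sigma} &
        {within Tv, continuous theta}] /\
    forall (s : R) (tau : T1), Iv s -> Tv tau ->
      U2 (psi1 (s, tau)) /\ phi2 (psi1 (s, tau)) = (s + sigma tau, theta tau).
Proof.
move=> c1 c2 p U1p U2p.
have [[_ oI1 _] [_ [inv11 [inv12 _]]]] := c1.
case E1 : (phi1 p) => [s0 tau0].
have [[Is0 _] pE] := inv11 p U1p; rewrite E1 in Is0 pE.
have [r1 r10 [B1 nB1 tr1]] := chart_translation_near hH hact c1 U1p.
have [r2 r20 [B2 nB2 tr2]] := chart_translation_near hH hact c2 U2p.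
pose j tau := psi1 (s0, tau).
have cj : continuous j := chart_slice_continuous c1 Is0.
pose Tv := j @^-1` (B1 `&` B2)°.
have TvB tau : Tv tau -> (B1 `&` B2) (j tau) by move=> /interior_subset.
have U2j tau : Tv tau -> U2 (j tau).
  by move=> /TvB[_ B2j]; have [] := tr2 0 _ (_ : `|0| < r2) B2j; rewrite ?normr0.
have phi2j tau : Tv tau -> {for tau, continuous (fun t => phi2 (j t))}.
  by move=> Tvtau; apply: continuous_comp (cj tau) (chart_phi_continuous_at c2 (U2j _ Tvtau)).
exists (ball s0 (Num.min r1 r2) `&` I1), Tv,
  (fun tau => (phi2 (j tau)).1 - s0), (fun tau => (phi2 (j tau)).2).
split; [split | split; [split |]].
- by apply: openI => //; exact: ball_open.
- by split => //; apply: ballxx; rewrite lt_min r10.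
- by move=> ? [].
- by move/continuousP: cj; apply; exact: open_interior.
- by rewrite /Tv/= /j pE; apply: filterI.
- rewrite continuous_open_subspace; last by move/continuousP: cj; apply; exact: open_interior.
  move=> tau /set_mem Tvtau; apply: cvgB; last exact: cvg_cst.
  by apply: continuous_comp (phi2j _ Tvtau) _; exact: cvg_fst.
- rewrite continuous_open_subspace; last by move/continuousP: cj; apply; exact: open_interior.
  move=> tau /set_mem Tvtau.
  by apply: continuous_comp (phi2j _ Tvtau) _; exact: cvg_snd.
move=> s tau [bs Is] Tvtau; have [B1w B2w] := TvB tau Tvtau.
have [st1 st2] : `|s - s0| < r1 /\ `|s - s0| < r2.
  by move: bs; rewrite /ball/= distrC lt_min => /andP.
have [_ U1H phi1H] := tr1 _ _ st1 B1w.
have [_ U2H phi2H] := tr2 _ _ st2 B2w.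
have phi1j : phi1 (j tau) = (s0, tau) by have [] := inv12 (s0, tau) (conj Is0 I).
have psiE : psi1 (s, tau) = H (s - s0, j tau).
  by have [_ <-] := inv11 _ U1H; rewrite phi1H phi1j /= addrC subrK.
by rewrite psiE phi2H; split => //; congr pair; lra.
Qed.

Theorem lemma5p1 (R : realType) (Z : topologicalType) (H : R * Z -> Z)
  (hZ : completely_hausdorff R Z) (hH : continuous H)
  (hact : is_R_action H) (hfree : locally_free H) :
  (forall x : Z, exists (T : topologicalType) (U : set Z) (I : set R)
      (phi : Z -> R * T) (psi : R * T -> Z),
      [/\ U x, flow_chart H U I phi psi & (phi x).1 = 0])
  /\
  (forall (T1 T2 : topologicalType) (U1 U2 : set Z) (I1 I2 : set R)
      (phi1 : Z -> R * T1) (psi1 : R * T1 -> Z)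
      (phi2 : Z -> R * T2) (psi2 : R * T2 -> Z),
      flow_chart H U1 I1 phi1 psi1 -> flow_chart H U2 I2 phi2 psi2 ->
      forall p : Z, U1 p -> U2 p ->
      exists (Iv : set R) (Tv : set T1) (sigma : T1 -> R) (theta : T1 -> T2),
        [/\ open Iv, Iv (phi1 p).1 & Iv `<=` I1] /\
        [/\ open Tv, Tv (phi1 p).2, {within Tv, continuous sigma} &
            {within Tv, continuous theta}] /\
            forall (s : R) (tau : T1), Iv s -> Tv tau ->
              U2 (psi1 (s, tau)) /\
              phi2 (psi1 (s, tau)) = (s + sigma tau, theta tau)).
Proof.
split; last exact: (chart_transition hH hact).
move=> x.
have [e [f [e0 cf fx]]] := separating_displacement x hZ hfree.
have [W0 [oW0 W0x] [d d0 increasing]] := orbit_average_increasing hH hact cf e0 fx.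
have cg := orbit_average_continuous hH cf (ltW e0).
exact: (flow_box_chart hH hact cg oW0 W0x d0 increasing).
Qed.
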